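(* Let $X_3\subset\mathbb{A}^2_{\mathbb{Q}}$ be the plane curve defined by $x^2-(2C+16)x+(C^3+8C^2+16C+64)=0$. Then the morphism $\varphi\colon\mathbb{A}^1_{\mathbb{Q}}\to X_3$, $t\mapsto(t^3-t^2+7t+1,\,-t^2-7)$, is the normalization of $X_3$.
   Context: The curve $X_3$ is the zero locus of $\widetilde\delta_3(x,C)=\delta_3(x,C/4)$, where $\delta_3$ is the third multiplier polynomial of the family $z\mapsto z^2+c$; its defining equation is as given. *)

From mathcomp Require Import all_boot all_order all_algebra.
Set Implicit Arguments. Unset Strict Implicit. Unset Printing Implicit Defensive.
Import GRing.Theory.
Local Open Scope ring_scope.

(* Bivariate polynomials over Q: Q[C][x], i.e. {poly {poly rat}}:
   the outer variable is x, the inner (coefficient) variable is C. *)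
Notation bipoly := {poly {poly rat}}.

(* Pullback of a polynomial function g(x,C) along t |-> (a t, b t):
   phistar a b g = g(a(t), b(t)) in Q[t]. *)
Definition phistar (a b : {poly rat}) (g : bipoly) : {poly rat} :=
  (map_poly (fun q : {poly rat} => q \Po b) g).[a].

(* The morphism phi : A^1 -> X_f, t |-> (a t, b t), is the normalization of the
   affine plane curve X_f = V(f) (with coordinate ring A = Q[x,C]/(f)):
   - the ring map phi^# : Q[x,C] -> Q[t] has kernel exactly (f) (so phi lands in
     X_f, phi^# : A -> Q[t] is injective, i.e. phi is dominant and X_f integral);
   - Q[t] is contained in Frac(A) (birationality): every g is p/q with p,q in A,
     q nonzero;
   - Q[t] is integral over A (finiteness): every g satisfies a monic equation with
     coefficients in A.
   Together with the normality of A^1 (Q[t] is integrally closed) this says that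
   Q[t] is the integral closure of A in its fraction field, i.e. phi is the
   normalization of X_f. *)
Definition is_normalization_A1 (f : bipoly) (a b : {poly rat}) : Prop :=
  [/\ (forall g : bipoly, phistar a b g = 0 <-> exists h : bipoly, g = h * f),
      (forall g : {poly rat}, exists p q : bipoly,
          phistar a b q != 0 /\ g * phistar a b q = phistar a b p)
    & (forall g : {poly rat}, exists c : seq bipoly,
          g ^+ (size c) + \sum_(i < size c) phistar a b c`_i * g ^+ i = 0)].

Definition Cv : bipoly := ('X : {poly rat})%:P.
Definition Xv : bipoly := 'X.
Definition f_X3 : bipoly :=
  Xv ^+ 2 - (2 * Cv + 16) * Xv + (Cv ^+ 3 + 8 * Cv ^+ 2 + 16 * Cv + 64).

Definition phi_x : {poly rat} := 'X ^+ 3 - 'X ^+ 2 + 7 * 'X + 1.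
Definition phi_C : {poly rat} := - 'X ^+ 2 - 7.

(* Write t for the coordinate of A^1 and A = Q[x,C]/(f).  As f is monic of
   degree 2 in x, the ideal (f) is the kernel of phi^# as soon as no nonzero
   r0(C) + r1(C) x pulls back to 0; and r0(phi_C) + r1(phi_C) phi_x <> 0
   because phi_C has even and phi_x odd degree in t.  Birationality comes from
   t = (C + 8 - x) / C, and integrality from t^2 = -C - 7: it gives
   Q[t] = A + A t, and g = u + v t is a root of Z^2 - 2u Z + u^2 + (C + 7) v^2. *)

From HB Require Import structures.
From mathcomp Require Import all_boot all_order all_algebra.
From mathcomp Require Import ring.
Import GRing.Theory.
Local Open Scope ring_scope.

Lemma size2_polyE (R : nzRingType) (p : {poly R}) :
  (size p <= 2)%N -> p = (p`_0)%:P + (p`_1)%:P * 'X.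
Proof.
move=> sp; apply/polyP => -[|[|i]]; rewrite coefD coefMX coefC ?coefC ?addr0 ?add0r //=.
by rewrite nth_default // (leq_trans sp).
Qed.

Lemma comp_poly_even_odd_eq0 (R : idomainType) (a b p q : {poly R}) :
  (1 < size b)%N -> ~~ odd (size b).-1 -> odd (size a).-1 ->
  p \Po b + (q \Po b) * a = 0 -> p = 0 /\ q = 0.
Proof.
move=> b_gt1 b_even a_odd pqa0.
have even_comp r : ~~ odd (size (r \Po b)).-1.
  by rewrite size_comp_poly oddM negb_and b_even orbT.
have q0 : q = 0.
  apply/eqP; apply: contraT => nz_q.
  have nz_qb : q \Po b != 0 by rewrite comp_poly_eq0.
  have nz_a : a != 0 by apply: contraTneq a_odd => ->; rewrite size_poly0.
  have pE : p \Po b = - ((q \Po b) * a) by apply/eqP; rewrite -addr_eq0 pqa0.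
  have := even_comp p; rewrite pE size_polyN size_mul //.
  rewrite (polySpred nz_qb) (polySpred nz_a) addnS /=.
  by rewrite oddD a_odd (negbTE (even_comp q)).
move: pqa0; rewrite q0 comp_poly0 mul0r addr0 => /eqP.
by rewrite comp_poly_eq0 // => /eqP.
Qed.

Section Pullback.
Variables a b : {poly rat}.

Fact phistar_is_zmod_morphism : zmod_morphism (phistar a b).
Proof. by move=> p q; rewrite /phistar rmorphB hornerD hornerN. Qed.

Fact phistar_is_monoid_morphism : monoid_morphism (phistar a b).
Proof.
by split=> [|p q]; rewrite /phistar ?rmorph1 ?hornerC // rmorphM hornerM.
Qed.

HB.instance Definition _ := GRing.isZmodMorphism.Build _ _ (phistar a b)
  phistar_is_zmod_morphism.
HB.instance Definition _ := GRing.isMonoidMorphism.Build _ _ (phistar a b)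
  phistar_is_monoid_morphism.

Lemma phistarC q : phistar a b q%:P = q \Po b.
Proof. by rewrite /phistar map_polyC hornerC. Qed.

Lemma phistarCC c : phistar a b c%:P%:P = c%:P.
Proof. by rewrite phistarC comp_polyC. Qed.

Lemma phistarX : phistar a b 'X = a.
Proof. by rewrite /phistar map_polyX hornerX. Qed.

Lemma phistar_Cv : phistar a b Cv = b.
Proof. by rewrite phistarC comp_polyX. Qed.

Lemma phistar_eq0_monic (f : bipoly) : f \is monic -> phistar a b f = 0 ->
    (forall r : bipoly, (size r < size f)%N -> phistar a b r = 0 -> r = 0) ->
  forall g, phistar a b g = 0 <-> exists h, g = h * f.
Proof.
move=> f_monic f0 inj_small g; split=> [g0|[h ->]]; last first.
  by rewrite rmorphM /= f0 mulr0.
have gE := Pdiv.IdomainMonic.divp_eq f_monic g.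
exists (g %/ f); rewrite [LHS]gE [_ %% f]inj_small ?addr0 //.
  by rewrite ltn_modpN0 ?monic_neq0.
by move: g0; rewrite {1}gE rmorphD rmorphM /= f0 mulr0 add0r.
Qed.

Lemma phistar_eq0_size2 : (1 < size b)%N -> ~~ odd (size b).-1 -> odd (size a).-1 ->
  forall r : bipoly, (size r < 3)%N -> phistar a b r = 0 -> r = 0.
Proof.
move=> b_gt1 b_even a_odd r /size2_polyE rE.
rewrite rE rmorphD rmorphM /= !phistarC phistarX.
by case/comp_poly_even_odd_eq0=> // -> ->; rewrite mul0r addr0.
Qed.

Lemma phistar_fraction (n d : bipoly) :
    phistar a b d != 0 -> 'X * phistar a b d = phistar a b n ->
  forall g, exists p q, phistar a b q != 0 /\ g * phistar a b q = phistar a b p.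
Proof.
move=> d_nz XdE; elim/poly_ind=> [|g c [p [q [q_nz gqE]]]].
  by exists 0, 1; rewrite rmorph0 rmorph1 mul0r oner_neq0.
exists (p * n + (c%:P)%:P * q * d), (q * d).
split; first by rewrite rmorphM mulf_neq0.
ring: gqE XdE (phistarCC c).
Qed.

Lemma phistar_integral_quadratic (e : bipoly) : 'X ^+ 2 = phistar a b e ->
  forall g, exists c : seq bipoly,
    g ^+ (size c) + \sum_(i < size c) phistar a b c`_i * g ^+ i = 0.
Proof.
move=> X2E g.
have [u [v ->]] : exists u v, g = phistar a b u + phistar a b v * 'X.
  elim/poly_ind: g => [|g c [u [v ->]]].
    by exists 0, 0; rewrite rmorph0 mul0r addr0.
  exists (v * e + (c%:P)%:P), u.
  ring: X2E (phistarCC c).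
exists [:: u ^+ 2 - v ^+ 2 * e; - (2 * u)].
rewrite /= !big_ord_recr big_ord0 /=.
ring: X2E.
Qed.

End Pullback.

Lemma size_CMXaddC_leq2 (R : nzRingType) (c d : R) :
  (size (c%:P * 'X + d%:P)%R <= 2)%N.
Proof. by rewrite size_MXaddC; case: ifP => // _; rewrite ltnS size_polyC_leq1. Qed.

Lemma f_X3E : f_X3 =
  'X^2 + ((- (2 * 'X + 16))%:P * 'X + ('X^3 + 8 * 'X^2 + 16 * 'X + 64)%:P).
Proof. by rewrite /f_X3 /Cv /Xv; ring. Qed.

Lemma size_f_X3 : size f_X3 = 3%N.
Proof. by rewrite f_X3E size_polyDl size_polyXn // ltnS size_CMXaddC_leq2. Qed.

Lemma monic_f_X3 : f_X3 \is monic.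
Proof.
by rewrite monicE f_X3E lead_coefDl ?lead_coefXn // size_polyXn ltnS size_CMXaddC_leq2.
Qed.

Lemma phistar_f_X3 : phistar phi_x phi_C f_X3 = 0.
Proof.
have := phistarX phi_x phi_C; have := phistar_Cv phi_x phi_C.
by rewrite /f_X3 /Xv /phi_x /phi_C => hC hx; ring: hx hC.
Qed.

Lemma X_mul_phi_C : 'X * phi_C = phistar phi_x phi_C (Cv + 8 - Xv).
Proof.
have := phistarX phi_x phi_C; have := phistar_Cv phi_x phi_C.
by rewrite /Xv /phi_x /phi_C => hC hx; ring: hx hC.
Qed.

Lemma sqrX_phistar : 'X ^+ 2 = phistar phi_x phi_C (- Cv - 7).
Proof.
have := phistarX phi_x phi_C; have := phistar_Cv phi_x phi_C.
by rewrite /Xv /phi_x /phi_C => hC hx; ring: hx hC.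
Qed.

Lemma size_phi_C : size phi_C = 3%N.
Proof.
have -> : phi_C = - ('X^2 + 7%:P) by rewrite /phi_C polyC_natr; ring.
by rewrite size_polyN size_XnaddC.
Qed.

Lemma size_phi_x : size phi_x = 4%N.
Proof.
have -> : phi_x = (('X - 1%:P) * 'X + 7%:P) * 'X + 1%:P.
  by rewrite /phi_x polyC_natr polyC1; ring.
by rewrite !size_MXaddC size_XsubC oner_eq0 !andbF.
Qed.

Theorem lemma2p6 : is_normalization_A1 f_X3 phi_x phi_C.
Proof.
split.
- apply: phistar_eq0_monic monic_f_X3 phistar_f_X3 _.
  by rewrite size_f_X3; apply: phistar_eq0_size2; rewrite ?size_phi_C ?size_phi_x.
- apply: (@phistar_fraction _ _ (Cv + 8 - Xv) Cv); rewrite phistar_Cv ?X_mul_phi_C //.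
  by rewrite -size_poly_eq0 size_phi_C.
- exact: phistar_integral_quadratic sqrX_phistar.
Qed.
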